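(* Let $\omega$ be a non-quasianalytic concave weight function and let $f:[0,\infty)\to[0,\infty)$ be any function with $\omega(t)=o(f(t))$ as $t\to\infty$. Then there exists a non-quasianalytic concave weight function $\tilde\omega$ such that $\omega(t)=o(\tilde\omega(t))$ and $\tilde\omega(t)=o(f(t))$ as $t\to\infty$.
   Context: A weight function is a continuous increasing $\omega:[0,\infty)\to[0,\infty)$ with $\omega(2t)=O(\omega(t))$, $\omega(t)=o(t)$, $\log t=o(\omega(t))$ as $t\to\infty$, and such that $t\mapsto\omega(e^t)$ is convex on $[0,\infty)$. It is non-quasianalytic if $\int_1^\infty\omega(t)t^{-2}\,dt<\infty$. *)

From Stdlib Require Import Reals.
From Coquelicot Require Import Coquelicot.
Open Scope R_scope.

Definition little_o_infty (g h : R -> R) : Prop :=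
  forall eps : R, 0 < eps ->
    exists M : R, forall t : R, M <= t -> Rabs (g t) <= eps * Rabs (h t).

Definition big_O_infty (g h : R -> R) : Prop :=
  exists C M : R, forall t : R, M <= t -> Rabs (g t) <= C * Rabs (h t).

Definition nonneg_half_line (x : R) : Prop := 0 <= x.

Definition convex_on_nonneg (g : R -> R) : Prop :=
  forall a b l : R, 0 <= a -> 0 <= b -> 0 <= l <= 1 ->
    g (l * a + (1 - l) * b) <= l * g a + (1 - l) * g b.

Definition concave_on_nonneg (g : R -> R) : Prop :=
  forall a b l : R, 0 <= a -> 0 <= b -> 0 <= l <= 1 ->
    l * g a + (1 - l) * g b <= g (l * a + (1 - l) * b).

(* A weight function omega : [0,oo) -> [0,oo) (values on negative reals are irrelevant). *)
Definition weight_function (w : R -> R) : Prop :=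
  (forall t, 0 <= t -> 0 <= w t) /\
  (forall x, 0 <= x ->
     filterlim w (within nonneg_half_line (locally x)) (locally (w x))) /\
  (forall s t, 0 <= s -> s <= t -> w s <= w t) /\
  big_O_infty (fun t => w (2 * t)) w /\
  little_o_infty w (fun t => t) /\
  little_o_infty ln w /\
  convex_on_nonneg (fun t => w (exp t)).

Definition non_quasianalytic (w : R -> R) : Prop :=
  ex_RInt_gen (fun t => w t / (t ^ 2)) (at_point 1) (Rbar_locally p_infty).

Definition concave_weight (w : R -> R) : Prop :=
  weight_function w /\ concave_on_nonneg w.

(* The new weight is [t |-> \int_0^t G (D u) du], where [D u = (w u - w (u/2)) / (u/2)]
   is a discrete derivative of [w] and [G x = \sum_j min (x, c_j)] for a sequence
   [c_j = 1 / T_j] that at least halves at each step.  Concavity of [w] makes [D]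
   non-increasing and convexity of [w \o exp] makes [u D u] non-decreasing; since
   [G x / x] is non-increasing, the integrand inherits both properties, so the new
   weight is concave and log-convex.  Where [D <= c_K] we have [G D >= (K + 1) D], and
   [\int_2^t D] is comparable to [w t]; hence [w = o(new weight)].  Conversely
   [G x <= (k + 1) x + 2 c_(k+1)], so on [[T_k, T_(k+1)]] the new weight is
   [O((k + 1) w)]: choosing [T] so that there [(k + 1)^2 w <= f] and the tail of
   [\int w / t^2] is below [2^-k / (k + 1)] gives [new weight = o(f)] and a
   convergent [\int new weight / t^2]. *)

From Stdlib Require Import Reals Lra Lia Psatz ClassicalEpsilon.
From Coquelicot Require Import Coquelicot.
Open Scope R_scope.

(** * Convexity through slopes *)

Definition slope (g : R -> R) (x y : R) : R := (g y - g x) / (y - x).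

Lemma convex_on_nonneg_slopes (g : R -> R) :
  (forall x y z, 0 <= x -> x < y -> y < z ->
     (g y - g x) * (z - y) <= (g z - g y) * (y - x)) ->
  convex_on_nonneg g.
Proof.
  intros H a b l Ha Hb Hl.
  destruct (Req_dec l 0) as [->|Hl0].
  { replace (0 * a + (1 - 0) * b) with b by ring. lra. }
  destruct (Req_dec l 1) as [->|Hl1].
  { replace (1 * a + (1 - 1) * b) with a by ring. lra. }
  set (y := l * a + (1 - l) * b).
  destruct (Rtotal_order a b) as [Hab|[<-|Hab]].
  - assert (Ey1 : y - a = (1 - l) * (b - a)) by (unfold y; ring).
    assert (Ey2 : b - y = l * (b - a)) by (unfold y; ring).
    assert (0 < (1 - l) * (b - a)) by (apply Rmult_lt_0_compat; lra).
    assert (0 < l * (b - a)) by (apply Rmult_lt_0_compat; lra).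
    specialize (H a y b Ha ltac:(lra) ltac:(lra)). rewrite Ey1, Ey2 in H.
    assert (K : (l * (g y - g a)) * (b - a) <= ((1 - l) * (g b - g y)) * (b - a)) by lra.
    apply Rmult_le_reg_r in K; lra.
  - unfold y. replace (l * a + (1 - l) * a) with a by ring. lra.
  - assert (Ey1 : y - b = l * (a - b)) by (unfold y; ring).
    assert (Ey2 : a - y = (1 - l) * (a - b)) by (unfold y; ring).
    assert (0 < l * (a - b)) by (apply Rmult_lt_0_compat; lra).
    assert (0 < (1 - l) * (a - b)) by (apply Rmult_lt_0_compat; lra).
    specialize (H b y a Hb ltac:(lra) ltac:(lra)). rewrite Ey1, Ey2 in H.
    assert (K : ((1 - l) * (g y - g b)) * (a - b) <= (l * (g a - g y)) * (a - b)) by lra.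
    apply Rmult_le_reg_r in K; lra.
Qed.

Lemma concave_on_nonneg_slopes (g : R -> R) :
  (forall x y z, 0 <= x -> x < y -> y < z ->
     (g z - g y) * (y - x) <= (g y - g x) * (z - y)) ->
  concave_on_nonneg g.
Proof.
  intros H a b l Ha Hb Hl.
  assert (Hc : convex_on_nonneg (fun x => - g x)).
  { apply convex_on_nonneg_slopes. intros x y z Hx Hxy Hyz.
    specialize (H x y z Hx Hxy Hyz). lra. }
  specialize (Hc a b l Ha Hb Hl). simpl in Hc. lra.
Qed.

Lemma concave_on_nonneg_chord (g : R -> R) : concave_on_nonneg g ->
  forall x y z, 0 <= x -> x < y -> y < z ->
    (g z - g y) * (y - x) <= (g y - g x) * (z - y).
Proof.
  intros H x y z Hx Hxy Hyz.
  set (l := (z - y) / (z - x)).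
  assert (Hl : 0 <= l <= 1).
  { unfold l. split.
    - apply Rmult_le_pos; [lra | apply Rlt_le, Rinv_0_lt_compat; lra].
    - apply Rmult_le_reg_r with (z - x); [lra |]. unfold Rdiv.
      rewrite Rmult_assoc, Rinv_l; lra. }
  specialize (H x z l Hx ltac:(lra) Hl).
  replace (l * x + (1 - l) * z) with y in H by (unfold l; field; lra).
  assert (K : (l * g x + (1 - l) * g z) * (z - x) <= g y * (z - x))
    by (apply Rmult_le_compat_r; lra).
  replace ((l * g x + (1 - l) * g z) * (z - x)) with ((z - y) * g x + (y - x) * g z)
    in K by (unfold l; field; lra).
  nra.
Qed.

Lemma concave_slope_antitone (g : R -> R) : concave_on_nonneg g ->
  forall a b a' b', 0 <= a -> a < b -> a' < b' -> a <= a' -> b <= b' ->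
    slope g a' b' <= slope g a b.
Proof.
  intros H a b a' b' Ha Hab Hab' Haa Hbb. unfold slope.
  apply Rle_trans with ((g b' - g a) / (b' - a)).
  - destruct (Req_dec a a') as [<-|Ha']; [lra |].
    pose proof (concave_on_nonneg_chord g H a a' b' Ha ltac:(lra) ltac:(lra)).
    apply Rmult_le_reg_r with ((b' - a') * (b' - a)); [nra |].
    field_simplify; [nra | lra | lra].
  - destruct (Req_dec b b') as [<-|Hb']; [lra |].
    pose proof (concave_on_nonneg_chord g H a b b' Ha Hab ltac:(lra)).
    apply Rmult_le_reg_r with ((b' - a) * (b - a)); [nra |].
    field_simplify; [nra | lra | lra].
Qed.

Lemma concave_double_le (g : R -> R) : concave_on_nonneg g -> 0 <= g 0 ->
  forall t, 0 <= t -> g (2 * t) <= 2 * g t.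
Proof.
  intros H H0 t Ht.
  specialize (H (2 * t) 0 (/ 2) ltac:(lra) (Rle_refl 0) ltac:(lra)).
  replace (/ 2 * (2 * t) + (1 - / 2) * 0) with t in H by field. lra.
Qed.

(** * Capped sums *)

Lemma Series_le_head_geom_tail (a : nat -> R) n A c0 :
  (forall j, 0 <= a j) -> (forall j, (j < n)%nat -> a j <= A) ->
  (forall j, a (n + j)%nat <= c0 * (/ 2) ^ j) ->
  ex_series a /\ Series a <= INR n * A + 2 * c0.
Proof.
  intros Ha0 Hhead Htail.
  assert (Hgeom : is_series (fun j => c0 * (/ 2) ^ j) (c0 * 2)).
  { apply is_series_ext with (fun j => (/ 2) ^ j * c0); [intros; simpl; ring |].
    replace (c0 * 2) with (/ (1 - / 2) * c0) by field.
    apply is_series_scal_r, is_series_geom. rewrite Rabs_pos_eq; lra. }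
  assert (Htail_ex : ex_series (fun k => a (n + k)%nat)).
  { apply (@ex_series_le R_AbsRing R_CompleteNormedModule) with (fun j => c0 * (/ 2) ^ j).
    - intros j. unfold norm; simpl. unfold abs; simpl. rewrite Rabs_pos_eq; auto.
    - eexists; eauto. }
  assert (Hex : ex_series a) by (apply (ex_series_incr_n a n); auto).
  split; [exact Hex |].
  assert (Htail_le : Series (fun k => a (n + k)%nat) <= c0 * 2).
  { rewrite <- (is_series_unique _ _ Hgeom). apply Series_le; [| eexists; eauto].
    intros j; split; auto. }
  destruct n as [|n].
  - rewrite (Series_ext a (fun k => a (0 + k)%nat)) by (intros; reflexivity).
    simpl in *. lra.
  - rewrite (Series_incr_n a (S n)) by (auto; lia). simpl Init.Nat.pred.
    assert (Hsum : forall m, (m <= n)%nat -> sum_f_R0 a m <= INR (S m) * A).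
    { induction m as [|m IH]; intros Hm.
      - simpl. rewrite Rmult_1_l. apply Hhead. lia.
      - simpl sum_f_R0. rewrite S_INR. specialize (IH ltac:(lia)).
        assert (a (S m) <= A) by (apply Hhead; lia). lra. }
    specialize (Hsum n (le_n _)). lra.
Qed.

Lemma sum_f_R0_le_Series (a : nat -> R) n :
  (forall j, 0 <= a j) -> ex_series a -> sum_f_R0 a n <= Series a.
Proof.
  intros Ha0 Hex.
  rewrite (Series_incr_n a (S n)) by (auto; lia). simpl Init.Nat.pred.
  assert (0 <= Series (fun k => a (S n + k)%nat)); [| lra].
  set (b := fun k => a (S n + k)%nat).
  replace 0 with (Series (fun k => 0 * b k)) by (rewrite Series_scal_l; ring).
  apply Series_le; [intros k; unfold b; specialize (Ha0 (S n + k)%nat); lra |].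
  apply (ex_series_incr_n a (S n)); auto.
Qed.

Definition halving (c : nat -> R) : Prop :=
  (forall j, 0 < c j) /\ (forall j, c (S j) <= c j / 2).

Lemma halving_geom c : halving c -> forall n j, c (n + j)%nat <= c n * (/ 2) ^ j.
Proof.
  intros [Hpos Hhalf] n j. induction j as [|j IH].
  - rewrite Nat.add_0_r. simpl. lra.
  - rewrite Nat.add_succ_r. specialize (Hhalf (n + j)%nat). simpl. lra.
Qed.

Lemma halving_antitone c : halving c -> forall j k, (j <= k)%nat -> c k <= c j.
Proof.
  intros [Hpos Hhalf] j k Hjk. induction Hjk as [|k _ IH]; [lra |].
  specialize (Hhalf k). specialize (Hpos k). lra.
Qed.

Lemma halving_small c : halving c -> forall eps, 0 < eps -> exists n, c n < eps.
Proof.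
  intros Hc eps Heps.
  destruct (pow_lt_1_zero (/ 2) ltac:(rewrite Rabs_pos_eq; lra) (eps / c 0%nat))
    as [N HN].
  { apply Rdiv_lt_0_compat; [lra | apply Hc]. }
  exists N. specialize (HN N (le_n _)).
  rewrite Rabs_pos_eq in HN by (apply pow_le; lra).
  pose proof (halving_geom c Hc 0 N) as Hg. pose proof (proj1 Hc 0%nat).
  simpl in Hg. apply Rmult_lt_compat_l with (r := c 0%nat) in HN; [| lra].
  replace (c 0%nat * (eps / c 0%nat)) with eps in HN by (field; lra). lra.
Qed.

Lemma continuity_pt_eps_delta (g : R -> R) x :
  (forall eps, 0 < eps -> exists d, 0 < d /\
     forall y, Rabs (y - x) < d -> Rabs (g y - g x) < eps) ->
  continuity_pt g x.
Proof.
  intros H eps Heps. destruct (H eps Heps) as [d [Hd Hg]].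
  exists d. split; [exact Hd |]. intros y [_ Hy]. apply Hg, Hy.
Qed.

Definition capped_term (c : nat -> R) (x : R) (j : nat) : R := Rmin (Rmax x 0) (c j).

Definition capped_sum (c : nat -> R) (x : R) : R := Series (capped_term c x).

Section CappedSum.

Variable c : nat -> R.
Hypothesis Hc : halving c.

Lemma capped_term_bounds x j : 0 <= capped_term c x j <= c j.
Proof.
  pose proof (proj1 Hc j). unfold capped_term, Rmin, Rmax.
  repeat destruct Rle_dec; lra.
Qed.

Lemma capped_term_le_geom x n j : capped_term c x (n + j) <= c n * (/ 2) ^ j.
Proof. eapply Rle_trans; [apply capped_term_bounds | apply halving_geom, Hc]. Qed.

Lemma ex_capped_sum x : ex_series (capped_term c x).
Proof.
  apply (Series_le_head_geom_tail _ 0 0 (c 0%nat)).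
  - apply capped_term_bounds.
  - intros; lia.
  - apply capped_term_le_geom.
Qed.

Lemma capped_sum_ge0 x : 0 <= capped_sum c x.
Proof.
  pose proof (sum_f_R0_le_Series (capped_term c x) 0) as H.
  pose proof (capped_term_bounds x 0).
  simpl in H. unfold capped_sum.
  specialize (H (fun j => proj1 (capped_term_bounds x j)) (ex_capped_sum x)). lra.
Qed.

Lemma capped_sum_le x y : x <= y -> capped_sum c x <= capped_sum c y.
Proof.
  intros Hxy. apply Series_le; [| apply ex_capped_sum].
  intros j. pose proof (capped_term_bounds x j). split; [lra |].
  unfold capped_term, Rmin, Rmax. repeat destruct Rle_dec; lra.
Qed.

Lemma capped_sum_le_linear k x : 0 <= x ->
  capped_sum c x <= INR (S k) * x + 2 * c (S k).
Proof.
  intros Hx. apply (Series_le_head_geom_tail _ (S k) x (c (S k))).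
  - apply capped_term_bounds.
  - intros j _. unfold capped_term, Rmin, Rmax. repeat destruct Rle_dec; lra.
  - apply capped_term_le_geom.
Qed.

Lemma capped_sum_ge_linear K x : 0 <= x <= c K -> INR (S K) * x <= capped_sum c x.
Proof.
  intros Hx. eapply Rle_trans; [| apply (sum_f_R0_le_Series _ K);
    [intros j; apply capped_term_bounds | apply ex_capped_sum]].
  assert (Hterm : forall j, (j <= K)%nat -> capped_term c x j = x).
  { intros j Hj. pose proof (halving_antitone c Hc j K Hj).
    unfold capped_term, Rmin, Rmax. repeat destruct Rle_dec; lra. }
  assert (forall m, (m <= K)%nat -> INR (S m) * x <= sum_f_R0 (capped_term c x) m);
    [| auto].
  induction m as [|m IH]; intros Hm.
  - simpl. rewrite Hterm by lia. lra.
  - simpl sum_f_R0. rewrite S_INR, (Hterm (S m) Hm). specialize (IH ltac:(lia)). lra.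
Qed.

Lemma capped_sum_ratio x y : 0 <= x -> x <= y -> x * capped_sum c y <= y * capped_sum c x.
Proof.
  intros Hx Hxy. unfold capped_sum. rewrite <- !Series_scal_l.
  apply Series_le.
  - intros j. pose proof (proj1 Hc j). pose proof (capped_term_bounds y j). split; [nra |].
    unfold capped_term, Rmin, Rmax. repeat destruct Rle_dec; nra.
  - destruct (ex_capped_sum x) as [l Hl]. exists (y * l).
    apply (is_series_scal_l y _ l Hl).
Qed.

(* Each of the first [n] terms moves by at most [Rabs (y - x)]; the rest sum to at
   most [2 c n]. *)
Lemma capped_sum_continuity_pt x : continuity_pt (capped_sum c) x.
Proof.
  apply continuity_pt_eps_delta. intros eps Heps.
  destruct (halving_small c Hc (eps / 4) ltac:(lra)) as [n Hn].
  pose proof (pos_INR n).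
  exists (eps / (2 * (INR n + 1))). split; [apply Rdiv_lt_0_compat; lra |].
  intros y Hy. unfold capped_sum.
  rewrite <- Series_minus by apply ex_capped_sum.
  destruct (Series_le_head_geom_tail (fun j => Rabs (capped_term c y j - capped_term c x j))
              n (Rabs (y - x)) (c n)) as [Hex Hle].
  - intros; apply Rabs_pos.
  - intros j _. unfold capped_term, Rmin, Rmax.
    repeat destruct Rle_dec; unfold Rabs; repeat destruct Rcase_abs; lra.
  - intros j. eapply Rle_trans; [| apply halving_geom, Hc].
    pose proof (proj1 Hc (n + j)%nat). unfold capped_term, Rmin, Rmax.
    repeat destruct Rle_dec; unfold Rabs; repeat destruct Rcase_abs; lra.
  - eapply Rle_lt_trans; [apply Series_Rabs, Hex |].
    assert (INR n * Rabs (y - x) <= INR n * (eps / (2 * (INR n + 1))))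
      by (apply Rmult_le_compat_l; lra).
    assert (INR n * (eps / (2 * (INR n + 1))) <= eps / 2).
    { apply Rmult_le_reg_r with (2 * (INR n + 1)); [lra |].
      field_simplify; [nra | lra]. }
    lra.
Qed.

End CappedSum.

Lemma RInt_le_const (g : R -> R) a b M : a <= b -> ex_RInt g a b ->
  (forall x, a < x < b -> g x <= M) -> RInt g a b <= (b - a) * M.
Proof.
  intros Hab Hex H.
  eapply Rle_trans; [apply RInt_le with (g := fun _ => M); auto; apply ex_RInt_const |].
  rewrite RInt_const. right; reflexivity.
Qed.

Lemma RInt_ge_const (g : R -> R) a b M : a <= b -> ex_RInt g a b ->
  (forall x, a < x < b -> M <= g x) -> (b - a) * M <= RInt g a b.
Proof.
  intros Hab Hex H.
  eapply Rle_trans; [| apply RInt_le with (f := fun _ => M); auto; apply ex_RInt_const].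
  rewrite RInt_const. right; reflexivity.
Qed.

Lemma ex_RInt_continuity_pos (g : R -> R) :
  (forall x, 0 < x -> continuity_pt g x) -> forall a b, 0 < a -> 0 < b -> ex_RInt g a b.
Proof.
  intros Hg a b Ha Hb. apply (@ex_RInt_continuous R_CompleteNormedModule).
  intros x Hx. apply continuity_pt_filterlim, Hg.
  unfold Rmin in Hx. destruct Rle_dec in Hx; lra.
Qed.

Lemma ex_RInt_div_sq (g : R -> R) : (forall x, 0 < x -> continuity_pt g x) ->
  forall a b, 0 < a -> 0 < b -> ex_RInt (fun t => g t / t ^ 2) a b.
Proof.
  intros Hg. apply ex_RInt_continuity_pos. intros x Hx.
  apply continuity_pt_div; [apply Hg, Hx | | apply pow_nonzero; lra].
  apply derivable_continuous_pt, derivable_pt_pow.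
Qed.

Lemma is_RInt_scal_inv K a b : 0 < a -> a <= b ->
  is_RInt (fun u => K / u) a b (K * (ln b - ln a)).
Proof.
  intros Ha Hab.
  apply (@is_RInt_scal R_NormedModule) with (k := K) (f := fun u => / u).
  apply (is_RInt_derive ln (fun u => / u)); intros x Hx; rewrite Rmin_left in Hx by lra.
  - apply is_derive_ln. lra.
  - apply continuity_pt_filterlim, continuity_pt_inv; [apply continuity_pt_id | lra].
Qed.

Lemma RInt_scal_R (g : R -> R) a b k : ex_RInt g a b ->
  RInt (fun x => k * g x) a b = k * RInt g a b.
Proof. exact (RInt_scal g a b k). Qed.

Lemma RInt_minus_R (f g : R -> R) a b : ex_RInt f a b -> ex_RInt g a b ->
  RInt (fun x => f x - g x) a b = RInt f a b - RInt g a b.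
Proof. exact (RInt_minus f g a b). Qed.

(** * Half slopes of a concave weight *)

Section ConcaveWeight.

Variable w : R -> R.
Hypothesis Hw : concave_weight w.

Lemma concave_weight_ge0 t : 0 <= t -> 0 <= w t.
Proof. apply Hw. Qed.

Lemma concave_weight_le s t : 0 <= s -> s <= t -> w s <= w t.
Proof. apply Hw. Qed.

Lemma concave_weight_continuity_pt x : 0 < x -> continuity_pt w x.
Proof.
  intros Hx. apply continuity_pt_filterlim. intros P HP.
  destruct Hw as [[_ [Hcont _]] _].
  specialize (Hcont x (Rlt_le _ _ Hx) P HP).
  assert (Hnear : locally x (fun y => 0 <= y)).
  { apply (locally_interval _ x 0 p_infty); simpl; auto. intros; lra. }
  unfold filtermap, within in *.
  generalize (filter_and _ _ Hcont Hnear). apply filter_imp. intros y [HPy Hy].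
  exact (HPy Hy).
Qed.

Lemma concave_weight_unbounded M : exists a, forall t, a <= t -> M <= w t.
Proof.
  destruct Hw as [[Hge0 [_ [_ [_ [_ [Hln _]]]]]] _].
  destruct (Hln 1 ltac:(lra)) as [M1 HM1].
  exists (Rmax M1 (Rmax (exp M) 1)). intros t Ht.
  pose proof (Rmax_l M1 (Rmax (exp M) 1)). pose proof (Rmax_r M1 (Rmax (exp M) 1)).
  pose proof (Rmax_l (exp M) 1). pose proof (Rmax_r (exp M) 1).
  specialize (HM1 t ltac:(lra)).
  rewrite Rmult_1_l, (Rabs_pos_eq (w t)) in HM1 by (apply Hge0; lra).
  assert (M <= ln t) by (rewrite <- (ln_exp M); apply ln_le; [apply exp_pos | lra]).
  pose proof (Rle_abs (ln t)). lra.
Qed.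

Definition half_slope (t : R) : R := slope w (t / 2) t.

Lemma half_slope_ge0 t : 0 < t -> 0 <= half_slope t.
Proof.
  intros Ht. unfold half_slope, slope.
  pose proof (concave_weight_le (t / 2) t ltac:(lra) ltac:(lra)).
  apply Rdiv_le_0_compat; lra.
Qed.

Lemma half_slope_antitone s t : 0 < s -> s <= t -> half_slope t <= half_slope s.
Proof. intros Hs Hst. apply concave_slope_antitone; try lra. apply Hw. Qed.

Lemma half_slope_le t : 0 < t -> half_slope t <= 2 * w t / t.
Proof.
  intros Ht. unfold half_slope, slope.
  pose proof (concave_weight_ge0 (t / 2) ltac:(lra)).
  replace (2 * w t / t) with (w t / (t - t / 2)) by (field; lra).
  apply Rmult_le_compat_r; [apply Rlt_le, Rinv_0_lt_compat |]; lra.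
Qed.

(* Convexity of [w \o exp] makes [w t - w (t/2)] non-decreasing. *)
Lemma mul_half_slope_le s t : 2 <= s -> s <= t -> s * half_slope s <= t * half_slope t.
Proof.
  intros Hs Hst.
  assert (Hdiff : forall u, 0 < u -> u * half_slope u = 2 * (w u - w (u / 2))).
  { intros u Hu. unfold half_slope, slope. field. lra. }
  rewrite !Hdiff by lra.
  destruct Hw as [[_ [_ [_ [_ [_ [_ Hcv]]]]]] _].
  assert (Hcc : concave_on_nonneg (fun x => - w (exp x))).
  { intros a b l Ha Hb Hl. specialize (Hcv a b l Ha Hb Hl). simpl in Hcv. lra. }
  assert (0 < ln 2) by (pose proof ln_lt_2; lra).
  assert (E1 : ln s - ln (s / 2) = ln 2) by (rewrite ln_div; lra).
  assert (E2 : ln t - ln (t / 2) = ln 2) by (rewrite ln_div; lra).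
  assert (0 <= ln (s / 2)) by (rewrite <- ln_1; apply ln_le; lra).
  pose proof (concave_slope_antitone _ Hcc (ln (s / 2)) (ln s) (ln (t / 2)) (ln t)
    ltac:(lra) ltac:(lra) ltac:(lra) ltac:(apply ln_le; lra) ltac:(apply ln_le; lra)) as Hsl.
  unfold slope in Hsl. rewrite E1, E2, !exp_ln in Hsl by lra.
  apply Rmult_le_compat_r with (r := ln 2) in Hsl; [| lra].
  unfold Rdiv in Hsl. rewrite !Rmult_assoc, Rinv_l in Hsl by lra. lra.
Qed.

Lemma half_slope_continuity_pt t : 0 < t -> continuity_pt half_slope t.
Proof.
  intros Ht.
  apply continuity_pt_ext with
    (div_fct (minus_fct w (comp w (fun s => s / 2))) (minus_fct id (fun s => s / 2))).
  { intros; reflexivity. }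
  assert (Hhalf : forall x, continuity_pt (fun s => s / 2) x).
  { intros x. apply continuity_pt_mult; [apply continuity_pt_id | apply continuity_pt_const].
    intros ? ?; reflexivity. }
  apply continuity_pt_div.
  - apply continuity_pt_minus; [apply concave_weight_continuity_pt; lra |].
    apply continuity_pt_comp; [apply Hhalf | apply concave_weight_continuity_pt; lra].
  - apply continuity_pt_minus; [apply continuity_pt_id | apply Hhalf].
  - unfold minus_fct, id. lra.
Qed.

Lemma half_slope_vanishes eps : 0 < eps ->
  exists M, 2 <= M /\ forall t, M <= t -> half_slope t <= eps.
Proof.
  intros Heps. destruct Hw as [[Hge0 [_ [_ [_ [Ho _]]]]] _].
  destruct (Ho (eps / 2) ltac:(lra)) as [M HM].
  exists (Rmax M 2). split; [apply Rmax_r |]. intros t Ht.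
  pose proof (Rmax_l M 2). pose proof (Rmax_r M 2).
  specialize (HM t ltac:(lra)). rewrite !Rabs_pos_eq in HM by (try apply Hge0; lra).
  eapply Rle_trans; [apply half_slope_le; lra |].
  apply Rmult_le_reg_r with t; [lra |]. unfold Rdiv.
  rewrite Rmult_assoc, Rinv_l by lra. lra.
Qed.



Lemma ex_RInt_weight_div a b : 0 < a -> 0 < b -> ex_RInt (fun u => w u / u) a b.
Proof.
  apply ex_RInt_continuity_pos. intros x Hx.
  apply continuity_pt_div; [apply concave_weight_continuity_pt, Hx | apply continuity_pt_id | lra].
Qed.

Lemma ex_RInt_half_slope a b : 0 < a -> 0 < b -> ex_RInt half_slope a b.
Proof. apply ex_RInt_continuity_pos, half_slope_continuity_pt. Qed.

Lemma RInt_half_slope t : 2 <= t ->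
  RInt half_slope 2 t = 2 * (RInt (fun u => w u / u) (t / 2) t - RInt (fun u => w u / u) 1 2).
Proof.
  intros Ht. set (h := fun u => w u / u).
  assert (Hex : forall a b, 0 < a -> 0 < b -> ex_RInt h a b) by apply ex_RInt_weight_div.
  assert (Hsplit : RInt half_slope 2 t = RInt (fun u => 2 * h u - h (u / 2)) 2 t).
  { apply (@RInt_ext R_CompleteNormedModule). intros x Hx. rewrite Rmin_left in Hx by lra.
    unfold half_slope, slope, h. simpl. field. lra. }
  assert (Hh2 : forall u, h (u / 2) = 2 * (/ 2 * h (/ 2 * u + 0))).
  { intros u. replace (/ 2 * u + 0) with (u / 2) by field.
    rewrite <- Rmult_assoc, Rinv_r, Rmult_1_l; [reflexivity | lra]. }
  assert (Hcomp : RInt (fun u => / 2 * h (/ 2 * u + 0)) 2 t = RInt h 1 (t / 2)).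
  { pose proof (RInt_comp_lin h (/ 2) 0 2 t ltac:(apply Hex; lra)) as C.
    replace (/ 2 * 2 + 0) with 1 in C by field.
    replace (/ 2 * t + 0) with (t / 2) in C by field. exact C. }
  assert (Hex2 : ex_RInt (fun u => / 2 * h (/ 2 * u + 0)) 2 t).
  { apply (ex_RInt_comp_lin h (/ 2) 0 2 t), Hex; lra. }
  assert (Hex3 : ex_RInt (fun u => h (u / 2)) 2 t).
  { apply ex_RInt_ext with (fun u => 2 * (/ 2 * h (/ 2 * u + 0))); [intros; symmetry; apply Hh2 |].
    apply (ex_RInt_scal _ _ _ 2 Hex2). }
  assert (Hhalf : RInt (fun u => h (u / 2)) 2 t = 2 * RInt h 1 (t / 2)).
  { rewrite <- Hcomp, <- RInt_scal_R by exact Hex2. apply RInt_ext. intros; apply Hh2. }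
  rewrite Hsplit, RInt_minus_R, RInt_scal_R, Hhalf;
    [| apply Hex; lra | exact (ex_RInt_scal h 2 t 2 (Hex 2 t ltac:(lra) ltac:(lra))) | exact Hex3].
  pose proof (RInt_Chasles h 1 2 t ltac:(apply Hex; lra) ltac:(apply Hex; lra)) as C1.
  pose proof (RInt_Chasles h 1 (t / 2) t ltac:(apply Hex; lra) ltac:(apply Hex; lra)) as C2.
  unfold plus in C1, C2; simpl in C1, C2. lra.
Qed.

Lemma RInt_half_slope_le t : 2 <= t -> RInt half_slope 2 t <= 2 * w t.
Proof.
  intros Ht. rewrite RInt_half_slope by exact Ht.
  assert (Hup : RInt (fun u => w u / u) (t / 2) t <= (t - t / 2) * (w t / (t / 2))).
  { apply RInt_le_const; [lra | apply ex_RInt_weight_div; lra |]. intros v Hv.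
    pose proof (concave_weight_le v t ltac:(lra) ltac:(lra)).
    pose proof (concave_weight_ge0 v ltac:(lra)).
    apply Rmult_le_compat; try lra; [apply Rlt_le, Rinv_0_lt_compat; lra |].
    apply Rinv_le_contravar; lra. }
  assert (Hlow : (2 - 1) * 0 <= RInt (fun u => w u / u) 1 2).
  { apply RInt_ge_const; [lra | apply ex_RInt_weight_div; lra |]. intros v Hv.
    apply Rdiv_le_0_compat; [apply concave_weight_ge0 |]; lra. }
  replace ((t - t / 2) * (w t / (t / 2))) with (w t) in Hup by (field; lra). lra.
Qed.

Lemma RInt_half_slope_ge t : 2 <= t -> w t / 2 - 2 * w 2 <= RInt half_slope 2 t.
Proof.
  intros Ht. rewrite RInt_half_slope by exact Ht.
  assert (Hlow : (t - t / 2) * (w (t / 2) / t) <= RInt (fun u => w u / u) (t / 2) t).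
  { apply RInt_ge_const; [lra | apply ex_RInt_weight_div; lra |]. intros v Hv.
    pose proof (concave_weight_le (t / 2) v ltac:(lra) ltac:(lra)).
    pose proof (concave_weight_ge0 (t / 2) ltac:(lra)).
    apply Rmult_le_compat; try lra; [apply Rlt_le, Rinv_0_lt_compat; lra |].
    apply Rinv_le_contravar; lra. }
  assert (Hup : RInt (fun u => w u / u) 1 2 <= (2 - 1) * w 2).
  { apply RInt_le_const; [lra | apply ex_RInt_weight_div; lra |]. intros v Hv.
    pose proof (concave_weight_le v 2 ltac:(lra) ltac:(lra)).
    pose proof (concave_weight_ge0 v ltac:(lra)).
    apply Rmult_le_reg_r with v; [lra |]. unfold Rdiv.
    rewrite Rmult_assoc, Rinv_l by lra. nra. }
  replace ((t - t / 2) * (w (t / 2) / t)) with (w (t / 2) / 2) in Hlow by (field; lra).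
  assert (Hhalf : w t <= 2 * w (t / 2)).
  { replace t with (2 * (t / 2)) at 1 by field.
    apply concave_double_le; [apply Hw | apply concave_weight_ge0; lra | lra]. }
  lra.
Qed.

End ConcaveWeight.

(** * The new weight *)

Lemma little_o_infty_trans (f g h : R -> R) :
  little_o_infty f g -> little_o_infty g h -> little_o_infty f h.
Proof.
  intros Hfg Hgh eps Heps.
  destruct (Hfg eps Heps) as [M1 HM1]. destruct (Hgh 1 ltac:(lra)) as [M2 HM2].
  exists (Rmax M1 M2). intros t Ht.
  pose proof (Rmax_l M1 M2). pose proof (Rmax_r M1 M2).
  specialize (HM1 t ltac:(lra)). specialize (HM2 t ltac:(lra)).
  eapply Rle_trans; [exact HM1 | apply Rmult_le_compat_l; lra].
Qed.

Section TildeWeight.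

Variables (c : nat -> R) (w : R -> R).
Hypothesis Hc : halving c.
Hypothesis Hw : concave_weight w.

Definition tilde_density (u : R) : R := capped_sum c (half_slope w (Rmax u 2)).

Definition tilde_weight (t : R) : R := RInt tilde_density 0 t.

Lemma tilde_density_ge0 u : 0 <= tilde_density u.
Proof. apply capped_sum_ge0, Hc. Qed.

Lemma tilde_density_eq u : 2 <= u -> tilde_density u = capped_sum c (half_slope w u).
Proof. intros Hu. unfold tilde_density. rewrite Rmax_left by lra. reflexivity. Qed.

Lemma tilde_density_antitone u v : u <= v -> tilde_density v <= tilde_density u.
Proof.
  intros Huv. apply capped_sum_le; [exact Hc |]. apply half_slope_antitone; [exact Hw | |].
  - pose proof (Rmax_r u 2). lra.
  - apply Rle_max_compat_r, Huv.
Qed.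

Lemma tilde_density_le_max u : tilde_density u <= tilde_density 2.
Proof.
  unfold tilde_density at 2. rewrite Rmax_left by lra.
  apply capped_sum_le; [exact Hc |]. apply half_slope_antitone; [exact Hw | lra | apply Rmax_r].
Qed.

(* [capped_sum c x / x] is non-increasing while [x * half_slope w x] is non-decreasing. *)
Lemma mul_capped_half_slope_le x y : 2 <= x -> x <= y ->
  x * capped_sum c (half_slope w x) <= y * capped_sum c (half_slope w y).
Proof.
  intros Hx Hxy.
  set (a := half_slope w y). set (b := half_slope w x).
  assert (Ha : 0 <= a) by (apply half_slope_ge0; [exact Hw | lra]).
  assert (Hab : a <= b) by (apply half_slope_antitone; [exact Hw | lra | exact Hxy]).
  assert (Hxb : x * b <= y * a) by (apply mul_half_slope_le; [exact Hw | exact Hx | exact Hxy]).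
  pose proof (capped_sum_ratio c Hc a b Ha Hab) as Hratio.
  pose proof (capped_sum_ge0 c Hc a). pose proof (capped_sum_ge0 c Hc b).
  destruct (Req_dec a 0) as [Ha0|Ha0].
  - assert (Hb0 : b = 0) by (rewrite Ha0 in Hxb; assert (0 <= b) by lra; nra).
    rewrite Ha0, Hb0. apply Rmult_le_compat_r; [apply capped_sum_ge0, Hc | exact Hxy].
  - apply Rmult_le_reg_l with a; [lra |]. nra.
Qed.

Lemma mul_tilde_density_le u v : 1 <= u -> u <= v -> u * tilde_density u <= v * tilde_density v.
Proof.
  intros Hu Huv. pose proof (tilde_density_ge0 2).
  destruct (Rle_dec 2 u) as [Hu2|Hu2].
  - rewrite !tilde_density_eq by lra. apply mul_capped_half_slope_le; lra.
  - assert (Hdu : tilde_density u = tilde_density 2)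
      by (unfold tilde_density; rewrite !Rmax_right by lra; reflexivity).
    rewrite Hdu. destruct (Rle_dec 2 v) as [Hv2|Hv2].
    + rewrite tilde_density_eq by lra.
      pose proof (mul_capped_half_slope_le 2 v ltac:(lra) Hv2). rewrite tilde_density_eq in * by lra.
      nra.
    + assert (Hdv : tilde_density v = tilde_density 2)
        by (unfold tilde_density; rewrite !Rmax_right by lra; reflexivity).
      rewrite Hdv. apply Rmult_le_compat_r; lra.
Qed.

Lemma tilde_density_continuity_pt u : continuity_pt tilde_density u.
Proof.
  apply continuity_pt_comp with (f1 := fun u => Rmax u 2)
    (f2 := fun x => capped_sum c (half_slope w x)).
  - apply continuity_pt_eps_delta. intros eps Heps. exists eps. split; [exact Heps |].
    intros y Hy. unfold Rmax in *. repeat destruct Rle_dec;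
      unfold Rabs in *; repeat destruct Rcase_abs; lra.
  - apply (continuity_pt_comp (half_slope w) (capped_sum c)).
    + apply half_slope_continuity_pt; [exact Hw |]. pose proof (Rmax_r u 2). lra.
    + apply capped_sum_continuity_pt, Hc.
Qed.

Lemma ex_RInt_tilde_density a b : ex_RInt tilde_density a b.
Proof.
  apply (@ex_RInt_continuous R_CompleteNormedModule). intros x _.
  apply continuity_pt_filterlim, tilde_density_continuity_pt.
Qed.

Lemma tilde_weight_sub a b : tilde_weight b - tilde_weight a = RInt tilde_density a b.
Proof.
  unfold tilde_weight. rewrite <- (RInt_Chasles tilde_density 0 a b)
    by apply ex_RInt_tilde_density.
  unfold plus; simpl. ring.
Qed.

Lemma tilde_weight_0 : tilde_weight 0 = 0.
Proof. apply (@RInt_point R_CompleteNormedModule). Qed.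

Lemma tilde_weight_le a b : a <= b -> tilde_weight a <= tilde_weight b.
Proof.
  intros Hab. pose proof (tilde_weight_sub a b) as Hsub.
  pose proof (RInt_ge_const tilde_density a b 0 Hab (ex_RInt_tilde_density a b)
    (fun x _ => tilde_density_ge0 x)). lra.
Qed.

Lemma tilde_weight_ge0 t : 0 <= t -> 0 <= tilde_weight t.
Proof. intros Ht. rewrite <- tilde_weight_0. apply tilde_weight_le, Ht. Qed.

Lemma tilde_weight_lipschitz a b : a <= b ->
  tilde_weight b - tilde_weight a <= (b - a) * tilde_density 2.
Proof.
  intros Hab. rewrite tilde_weight_sub.
  apply RInt_le_const; [exact Hab | apply ex_RInt_tilde_density |].
  intros; apply tilde_density_le_max.
Qed.

Lemma tilde_weight_continuity_pt x : continuity_pt tilde_weight x.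
Proof.
  apply continuity_pt_eps_delta. intros eps Heps.
  pose proof (tilde_density_ge0 2) as HL.
  exists (eps / (tilde_density 2 + 1)). split; [apply Rdiv_lt_0_compat; lra |]. intros y Hy.
  assert (Hlip : Rabs (tilde_weight y - tilde_weight x) <= tilde_density 2 * Rabs (y - x)).
  { destruct (Rle_dec x y) as [Hxy|Hxy].
    - pose proof (tilde_weight_lipschitz x y Hxy). pose proof (tilde_weight_le x y Hxy).
      rewrite !Rabs_pos_eq by lra. lra.
    - pose proof (tilde_weight_lipschitz y x ltac:(lra)).
      pose proof (tilde_weight_le y x ltac:(lra)).
      rewrite Rabs_left1, (Rabs_left (y - x)) by lra. lra. }
  assert (tilde_density 2 * Rabs (y - x) <= tilde_density 2 * (eps / (tilde_density 2 + 1)))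
    by (apply Rmult_le_compat_l; lra).
  assert (tilde_density 2 * (eps / (tilde_density 2 + 1)) < eps).
  { apply Rmult_lt_reg_r with (tilde_density 2 + 1); [lra |]. field_simplify; lra. }
  lra.
Qed.

Lemma tilde_weight_concave : concave_on_nonneg tilde_weight.
Proof.
  apply concave_on_nonneg_slopes. intros x y z Hx Hxy Hyz.
  assert (Hright : tilde_weight z - tilde_weight y <= (z - y) * tilde_density y).
  { rewrite tilde_weight_sub. apply RInt_le_const; [lra | apply ex_RInt_tilde_density |].
    intros; apply tilde_density_antitone; lra. }
  assert (Hleft : (y - x) * tilde_density y <= tilde_weight y - tilde_weight x).
  { rewrite tilde_weight_sub. apply RInt_ge_const; [lra | apply ex_RInt_tilde_density |].
    intros; apply tilde_density_antitone; lra. }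
  apply Rle_trans with ((z - y) * tilde_density y * (y - x)); [apply Rmult_le_compat_r; lra |].
  replace ((z - y) * tilde_density y * (y - x)) with ((y - x) * tilde_density y * (z - y))
    by ring.
  apply Rmult_le_compat_r; lra.
Qed.

(* On [[exp x, exp y]] the density is at most [K / u], on [[exp y, exp z]] at least
   [K / u], with [K = exp y * tilde_density (exp y)]. *)
Lemma tilde_weight_exp_convex : convex_on_nonneg (fun s => tilde_weight (exp s)).
Proof.
  apply convex_on_nonneg_slopes. intros x y z Hx Hxy Hyz.
  assert (1 <= exp x) by (pose proof (exp_ineq1_le x); lra).
  assert (exp x < exp y) by (apply exp_increasing; lra).
  assert (exp y < exp z) by (apply exp_increasing; lra).
  set (K := exp y * tilde_density (exp y)).
  assert (HK : forall a b, 0 < a -> a <= b ->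
    RInt (fun u => K / u) a b = K * (ln b - ln a)).
  { intros a b Ha Hab. apply is_RInt_unique, is_RInt_scal_inv; lra. }
  assert (Hex : forall a b, 0 < a -> a <= b -> ex_RInt (fun u => K / u) a b).
  { intros a b Ha Hab. eexists. apply is_RInt_scal_inv; lra. }
  assert (Hleft : tilde_weight (exp y) - tilde_weight (exp x) <= K * (y - x)).
  { rewrite tilde_weight_sub.
    replace (K * (y - x)) with (RInt (fun u => K / u) (exp x) (exp y))
      by ((rewrite HK by lra); rewrite !ln_exp; reflexivity).
    apply RInt_le; [lra | apply ex_RInt_tilde_density | apply Hex; lra |].
    intros u Hu. apply Rmult_le_reg_l with u; [lra |]. unfold Rdiv.
    rewrite (Rmult_comm K), <- Rmult_assoc, Rinv_r, Rmult_1_l by lra.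
    apply mul_tilde_density_le; lra. }
  assert (Hright : K * (z - y) <= tilde_weight (exp z) - tilde_weight (exp y)).
  { rewrite tilde_weight_sub.
    replace (K * (z - y)) with (RInt (fun u => K / u) (exp y) (exp z))
      by ((rewrite HK by lra); rewrite !ln_exp; reflexivity).
    apply RInt_le; [lra | apply Hex; lra | apply ex_RInt_tilde_density |].
    intros u Hu. apply Rmult_le_reg_l with u; [lra |]. unfold Rdiv.
    rewrite (Rmult_comm K), <- Rmult_assoc, Rinv_r, Rmult_1_l by lra.
    apply mul_tilde_density_le; lra. }
  apply Rle_trans with (K * (y - x) * (z - y)); [apply Rmult_le_compat_r; lra |].
  replace (K * (y - x) * (z - y)) with (K * (z - y) * (y - x)) by ring.
  apply Rmult_le_compat_r; lra.
Qed.

Lemma tilde_weight_ge K tau t : 2 <= tau -> tau <= t ->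
  (forall u, tau <= u -> half_slope w u <= c K) ->
  INR (S K) * (RInt (half_slope w) 2 t - RInt (half_slope w) 2 tau) <= tilde_weight t.
Proof.
  intros Htau Ht Hsmall.
  assert (Hex : ex_RInt (half_slope w) tau t) by (apply ex_RInt_half_slope; auto; lra).
  pose proof (RInt_Chasles (half_slope w) 2 tau t
    ltac:(apply ex_RInt_half_slope; auto; lra) Hex) as Hchasles.
  change (RInt (half_slope w) 2 tau + RInt (half_slope w) tau t = RInt (half_slope w) 2 t)
    in Hchasles.
  assert (Hint : RInt (fun u => INR (S K) * half_slope w u) tau t
                 <= RInt tilde_density tau t).
  { apply RInt_le; [exact Ht | exact (ex_RInt_scal _ _ _ (INR (S K)) Hex)
                   | apply ex_RInt_tilde_density |].
    intros u Hu. rewrite tilde_density_eq by lra.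
    apply capped_sum_ge_linear; [exact Hc |].
    split; [apply half_slope_ge0; [exact Hw | lra] | apply Hsmall; lra]. }
  rewrite RInt_scal_R in Hint by exact Hex.
  pose proof (tilde_weight_sub tau t). pose proof (tilde_weight_ge0 tau ltac:(lra)).
  replace (RInt (half_slope w) 2 t - RInt (half_slope w) 2 tau)
    with (RInt (half_slope w) tau t) by lra.
  lra.
Qed.

Lemma tilde_weight_le_linear k t : 2 <= t -> c (S k) * t <= 1 ->
  tilde_weight t <= 2 * tilde_density 2 + 2 + INR (S k) * (2 * w t).
Proof.
  intros Ht Hct.
  pose proof (tilde_weight_lipschitz 0 2 ltac:(lra)) as Hhead.
  rewrite tilde_weight_0 in Hhead.
  assert (Hex : ex_RInt (half_slope w) 2 t) by (apply ex_RInt_half_slope; auto; lra).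
  assert (Hex_lin : ex_RInt (fun u => INR (S k) * half_slope w u + 2 * c (S k)) 2 t).
  { apply (ex_RInt_plus (fun u => INR (S k) * half_slope w u) (fun _ => 2 * c (S k))).
    - exact (ex_RInt_scal _ _ _ (INR (S k)) Hex).
    - apply ex_RInt_const. }
  assert (Hint : RInt tilde_density 2 t
                 <= RInt (fun u => INR (S k) * half_slope w u + 2 * c (S k)) 2 t).
  { apply RInt_le; [exact Ht | apply ex_RInt_tilde_density | exact Hex_lin |].
    intros u Hu. rewrite tilde_density_eq by lra.
    apply capped_sum_le_linear; [exact Hc | apply half_slope_ge0; [exact Hw | lra]]. }
  assert (Hsum : RInt (fun u => INR (S k) * half_slope w u + 2 * c (S k)) 2 t
                 = INR (S k) * RInt (half_slope w) 2 t + (t - 2) * (2 * c (S k))).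
  { rewrite (RInt_plus (fun u => INR (S k) * half_slope w u) (fun _ => 2 * c (S k)))
      by (try exact (ex_RInt_scal _ _ _ (INR (S k)) Hex); apply ex_RInt_const).
    rewrite RInt_const, RInt_scal_R by exact Hex. reflexivity. }
  pose proof (tilde_weight_sub 2 t).
  pose proof (RInt_half_slope_le w Hw t Ht).
  pose proof (proj1 Hc (S k)).
  assert (INR (S k) * RInt (half_slope w) 2 t <= INR (S k) * (2 * w t))
    by (apply Rmult_le_compat_l; [apply pos_INR | lra]).
  nra.
Qed.

Lemma little_o_weight_tilde_weight : little_o_infty w tilde_weight.
Proof.
  intros eps Heps.
  destruct (INR_unbounded (4 / eps)) as [K HK].
  assert (HK' : 4 <= eps * INR (S K)).
  { rewrite S_INR. apply Rmult_lt_compat_l with (r := eps) in HK; [| exact Heps].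
    replace (eps * (4 / eps)) with 4 in HK by (field; lra). lra. }
  destruct (half_slope_vanishes w Hw (c K) (proj1 Hc K)) as [tau [Htau Hsmall]].
  set (C := 2 * w 2 + RInt (half_slope w) 2 tau).
  destruct (concave_weight_unbounded w Hw (4 * C)) as [a Ha].
  exists (Rmax tau a). intros t Ht.
  pose proof (Rmax_l tau a). pose proof (Rmax_r tau a).
  pose proof (tilde_weight_ge K tau t Htau ltac:(lra) Hsmall) as Hlow.
  pose proof (RInt_half_slope_ge w Hw t ltac:(lra)).
  specialize (Ha t ltac:(lra)).
  pose proof (concave_weight_ge0 w Hw t ltac:(lra)).
  pose proof (pos_INR (S K)).
  rewrite (Rabs_pos_eq (w t)), (Rabs_pos_eq (tilde_weight t))
    by (try apply tilde_weight_ge0; lra).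
  assert (INR (S K) * (w t / 4) <= tilde_weight t).
  { eapply Rle_trans; [| exact Hlow]. apply Rmult_le_compat_l; [lra |]. unfold C in Ha. lra. }
  nra.
Qed.

Lemma little_o_tilde_weight_id : little_o_infty tilde_weight (fun t => t).
Proof.
  intros eps Heps.
  destruct (halving_small c Hc (eps / 4) ltac:(lra)) as [n Hn].
  assert (Hn' : 2 * c (S n) <= eps / 4)
    by (pose proof (proj2 Hc n); pose proof (proj1 Hc n); lra).
  assert (0 < INR (S n)) by apply lt_0_INR, Nat.lt_0_succ.
  destruct (half_slope_vanishes w Hw (eps / (4 * INR (S n)))) as [tau [Htau Hsmall]].
  { apply Rdiv_lt_0_compat; lra. }
  assert (Hdensity : forall u, tau <= u -> tilde_density u <= eps / 2).
  { intros u Hu. rewrite tilde_density_eq by lra.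
    eapply Rle_trans; [apply capped_sum_le_linear with (k := n); [exact Hc |] |].
    - apply half_slope_ge0; [exact Hw | lra].
    - specialize (Hsmall u Hu).
      assert (INR (S n) * half_slope w u <= INR (S n) * (eps / (4 * INR (S n))))
        by (apply Rmult_le_compat_l; lra).
      replace (INR (S n) * (eps / (4 * INR (S n)))) with (eps / 4) in * by (field; lra).
      lra. }
  exists (Rmax tau (2 * tilde_weight tau / eps)). intros t Ht.
  pose proof (Rmax_l tau (2 * tilde_weight tau / eps)).
  pose proof (Rmax_r tau (2 * tilde_weight tau / eps)).
  assert (Htail : tilde_weight t - tilde_weight tau <= (t - tau) * (eps / 2)).
  { rewrite tilde_weight_sub. apply RInt_le_const; [lra | apply ex_RInt_tilde_density |].
    intros u Hu. apply Hdensity. lra. }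
  assert (Hhead : tilde_weight tau <= t * (eps / 2)).
  { apply Rmult_le_reg_r with (2 / eps); [apply Rdiv_lt_0_compat; lra |].
    replace (t * (eps / 2) * (2 / eps)) with t by (field; lra). lra. }
  pose proof (tilde_weight_ge0 tau ltac:(lra)).
  rewrite Rabs_pos_eq by (apply tilde_weight_ge0; lra). rewrite (Rabs_pos_eq t) by lra.
  assert (0 <= tau * (eps / 2)) by (apply Rmult_le_pos; lra). nra.
Qed.

Lemma tilde_weight_concave_weight : concave_weight tilde_weight.
Proof.
  split; [| exact tilde_weight_concave].
  split; [exact tilde_weight_ge0 |]. split.
  { intros x _. eapply filterlim_filter_le_1; [apply filter_le_within |].
    apply continuity_pt_filterlim, tilde_weight_continuity_pt. }
  split; [intros s t Hs; apply tilde_weight_le |]. split.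
  { exists 2, 0. intros t Ht.
    rewrite !Rabs_pos_eq by (apply tilde_weight_ge0; lra).
    apply concave_double_le; [exact tilde_weight_concave | rewrite tilde_weight_0; lra | lra]. }
  split; [exact little_o_tilde_weight_id |]. split; [| exact tilde_weight_exp_convex].
  apply little_o_infty_trans with w; [apply Hw | exact little_o_weight_tilde_weight].
Qed.

End TildeWeight.

(** * Adapted scales *)

Lemma non_quasianalytic_tail (w : R -> R) : non_quasianalytic w -> forall eps, 0 < eps ->
  exists a, forall x y, a <= x -> x <= y -> RInt (fun t => w t / t ^ 2) x y <= eps.
Proof.
  intros [l Hl] eps Heps.
  destruct (Hl (ball l (mkposreal _ (Rdiv_lt_0_compat eps 2 Heps ltac:(lra))))
    (locally_ball _ _)) as [Q R' HQ [M HM] HP].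
  exists (Rmax (M + 1) 1). intros x y Hx Hxy.
  pose proof (Rmax_l (M + 1) 1). pose proof (Rmax_r (M + 1) 1).
  destruct (HP 1 x HQ ltac:(apply HM; lra)) as [lx [Hlx Hbx]].
  destruct (HP 1 y HQ ltac:(apply HM; lra)) as [ly [Hly Hby]].
  cbn [fst snd] in Hlx, Hly. unfold ball in Hbx, Hby; simpl in Hbx, Hby.
  unfold AbsRing_ball, abs, minus, plus, opp in Hbx, Hby; simpl in Hbx, Hby.
  assert (Hex1x : ex_RInt (fun t => w t / t ^ 2) 1 x) by (eexists; eauto).
  assert (Hex1y : ex_RInt (fun t => w t / t ^ 2) 1 y) by (eexists; eauto).
  assert (Hexxy : ex_RInt (fun t => w t / t ^ 2) x y)
    by (apply (@ex_RInt_Chasles_2 R_CompleteNormedModule) with 1; [lra | exact Hex1y]).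
  pose proof (RInt_Chasles _ 1 x y Hex1x Hexxy) as Hchasles.
  rewrite (is_RInt_unique _ _ _ _ Hlx), (is_RInt_unique _ _ _ _ Hly) in Hchasles.
  change (lx + RInt (fun t => w t / t ^ 2) x y = ly) in Hchasles.
  unfold Rabs in Hbx, Hby. destruct (Rcase_abs (lx + - l)); destruct (Rcase_abs (ly + - l)); lra.
Qed.

Lemma ex_RInt_gen_monotone_bounded (g : R -> R) :
  (forall a b, 1 <= a -> 1 <= b -> ex_RInt g a b) ->
  (forall x y, 1 <= x -> x <= y -> RInt g 1 x <= RInt g 1 y) ->
  (exists B, forall b, 1 <= b -> RInt g 1 b <= B) ->
  ex_RInt_gen g (at_point 1) (Rbar_locally p_infty).
Proof.
  intros Hex Hmono [B HB].
  set (Vals := fun v => exists b, 1 <= b /\ v = RInt g 1 b).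
  destruct (completeness Vals) as [l [Hub Hlub]].
  { exists B. intros v [b [Hb ->]]. auto. }
  { exists (RInt g 1 1), 1. split; [lra | reflexivity]. }
  exists l. intros P [eps Heps].
  destruct (classic (exists b0, 1 <= b0 /\ l - eps < RInt g 1 b0)) as [[b0 [Hb0 Hlt]]|Hnone].
  2: { exfalso. assert (Hub' : is_upper_bound Vals (l - eps)).
       { intros v [b [Hb ->]]. apply Rnot_lt_le. intros Hlt. apply Hnone. exists b. auto. }
       specialize (Hlub _ Hub'). destruct eps; simpl in *; lra. }
  apply Filter_prod with (Q := fun a => a = 1) (R := fun b => b0 < b);
    [reflexivity | exists b0; auto |].
  intros x y -> Hy. exists (RInt g 1 y). split; [apply (RInt_correct g 1 y), Hex; lra |].
  apply Heps.
  assert (RInt g 1 y <= l) by (apply Hub; exists y; split; [lra | reflexivity]).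
  assert (RInt g 1 b0 <= RInt g 1 y) by (apply Hmono; lra).
  change (Rabs (RInt g 1 y - l) < eps).
  unfold Rabs. destruct Rcase_abs; destruct eps; simpl in *; lra.
Qed.

Definition scale_point (w f : R -> R) (k : nat) (a : R) : Prop :=
  2 <= a /\ forall t, a <= t ->
    1 <= w t /\ INR (S k) ^ 2 * w t <= f t /\
    forall y, t <= y -> RInt (fun s => w s / s ^ 2) t y <= (/ 2) ^ k / INR (S k).

Lemma scale_point_le w f k a b : scale_point w f k a -> a <= b -> scale_point w f k b.
Proof. intros [Ha H] Hab. split; [lra |]. intros t Ht. apply H. lra. Qed.

Lemma exists_scale_point (w f : R -> R) k :
  concave_weight w -> non_quasianalytic w -> (forall t, 0 <= t -> 0 <= f t) ->
  little_o_infty w f -> exists a, scale_point w f k a.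
Proof.
  intros Hw Hnq Hf Hwf.
  assert (Hk : 0 < INR (S k)) by apply lt_0_INR, Nat.lt_0_succ.
  destruct (concave_weight_unbounded w Hw 1) as [a1 H1].
  destruct (Hwf (/ INR (S k) ^ 2)) as [a2 H2].
  { apply Rinv_0_lt_compat, pow_lt, Hk. }
  destruct (non_quasianalytic_tail w Hnq ((/ 2) ^ k / INR (S k))) as [a3 H3].
  { apply Rdiv_lt_0_compat; [apply pow_lt; lra | exact Hk]. }
  exists (Rmax 2 (Rmax a1 (Rmax a2 a3))).
  pose proof (Rmax_l 2 (Rmax a1 (Rmax a2 a3))). pose proof (Rmax_r 2 (Rmax a1 (Rmax a2 a3))).
  pose proof (Rmax_l a1 (Rmax a2 a3)). pose proof (Rmax_r a1 (Rmax a2 a3)).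
  pose proof (Rmax_l a2 a3). pose proof (Rmax_r a2 a3).
  split; [lra |]. intros t Ht. split; [apply H1; lra |]. split.
  - specialize (H2 t ltac:(lra)).
    rewrite (Rabs_pos_eq (w t)), (Rabs_pos_eq (f t)) in H2
      by (try apply Hf; try apply concave_weight_ge0; auto; lra).
    apply Rmult_le_compat_l with (r := INR (S k) ^ 2) in H2; [| apply pow_le; lra].
    rewrite <- Rmult_assoc, Rinv_r, Rmult_1_l in H2 by (apply pow_nonzero; lra). exact H2.
  - intros y Hy. apply H3; lra.
Qed.

Fixpoint doubling_envelope (A : nat -> R) (n : nat) : R :=
  match n with
  | O => A O
  | S m => Rmax (2 * doubling_envelope A m) (A (S m))
  end.

Lemma doubling_envelope_ge A n : A n <= doubling_envelope A n.
Proof. destruct n; simpl; [lra | apply Rmax_r]. Qed.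

Lemma doubling_envelope_double A n : 2 * doubling_envelope A n <= doubling_envelope A (S n).
Proof. apply Rmax_l. Qed.

Definition adapted_scale (w f : R -> R) (T : nat -> R) : Prop :=
  (forall k, scale_point w f k (T k)) /\ (forall k, 2 * T k <= T (S k)).

Lemma exists_adapted_scale (w f : R -> R) :
  concave_weight w -> non_quasianalytic w -> (forall t, 0 <= t -> 0 <= f t) ->
  little_o_infty w f -> exists T, adapted_scale w f T.
Proof.
  intros Hw Hnq Hf Hwf.
  destruct (choice (scale_point w f)) as [A HA].
  { intros k. apply exists_scale_point; assumption. }
  exists (doubling_envelope A). split.
  - intros k. apply scale_point_le with (A k); [apply HA | apply doubling_envelope_ge].
  - apply doubling_envelope_double.
Qed.

Section AdaptedScale.

Variables (w f : R -> R) (T : nat -> R).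
Hypothesis Hw : concave_weight w.
Hypothesis HT : adapted_scale w f T.

Lemma adapted_scale_ge2 k : 2 <= T k.
Proof. apply (proj1 (proj1 HT k)). Qed.

Lemma adapted_scale_weight k t : T k <= t ->
  1 <= w t /\ INR (S k) ^ 2 * w t <= f t.
Proof.
  intros Ht. destruct (proj2 (proj1 HT k) t Ht) as [H1 [H2 _]]. split; assumption.
Qed.

Lemma adapted_scale_tail k x y : T k <= x -> x <= y ->
  RInt (fun s => w s / s ^ 2) x y <= (/ 2) ^ k / INR (S k).
Proof. intros Hx Hxy. apply (proj2 (proj1 HT k) x Hx), Hxy. Qed.

Lemma adapted_scale_halving : halving (fun n => / T n).
Proof.
  split; intros j; pose proof (adapted_scale_ge2 j).
  - apply Rinv_0_lt_compat. lra.
  - pose proof (proj2 HT j). apply Rle_trans with (/ (2 * T j)).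
    + apply Rinv_le_contravar; lra.
    + right. field. lra.
Qed.

Lemma adapted_scale_le j k : (j <= k)%nat -> T j <= T k.
Proof.
  intros Hjk. induction Hjk as [|k _ IH]; [lra |].
  pose proof (proj2 HT k). pose proof (adapted_scale_ge2 k). lra.
Qed.

Lemma adapted_scale_unbounded t : exists n, t <= T n.
Proof.
  assert (Hlin : forall n, INR n <= T n).
  { induction n as [|n IH]; [simpl; pose proof (adapted_scale_ge2 0); lra |].
    rewrite S_INR. pose proof (proj2 HT n). pose proof (adapted_scale_ge2 n). lra. }
  destruct (INR_unbounded t) as [n Hn]. exists n. specialize (Hlin n). lra.
Qed.

Lemma adapted_scale_block K t : T K <= t -> exists k, (K <= k)%nat /\ T k <= t <= T (S k).
Proof.
  intros Ht. destruct (adapted_scale_unbounded t) as [N HN].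
  assert (Hfind : forall n, t <= T (K + n) ->
            exists k, (K <= k)%nat /\ T k <= t <= T (S k)).
  { induction n as [|n IH]; intros Hn.
    - exists K. rewrite Nat.add_0_r in Hn. pose proof (proj2 HT K).
      pose proof (adapted_scale_ge2 K). split; [lia | lra].
    - destruct (Rle_dec t (T (K + n)%nat)) as [Hle|Hgt]; [apply IH, Hle |].
      exists (K + n)%nat. rewrite Nat.add_succ_r in Hn. split; [lia | lra]. }
  destruct (Nat.le_gt_cases N K) as [HNK|HNK].
  - apply (Hfind 0%nat). rewrite Nat.add_0_r. pose proof (adapted_scale_le N K HNK). lra.
  - apply (Hfind (N - K)%nat). replace (K + (N - K))%nat with N by lia. exact HN.
Qed.

Let W := tilde_weight (fun n => / T n) w.
Let S0 := 2 * tilde_density (fun n => / T n) w 2 + 4.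

Lemma tilde_weight_le_scale k t : T k <= t <= T (S k) -> W t <= S0 * INR (S k) * w t.
Proof.
  intros Ht. pose proof (adapted_scale_ge2 k). pose proof (adapted_scale_ge2 (S k)).
  assert (Hupper := tilde_weight_le_linear _ w adapted_scale_halving Hw k t ltac:(lra)).
  specialize (Hupper ltac:(apply Rmult_le_reg_l with (T (S k)); [lra |];
    rewrite <- Rmult_assoc, Rinv_r, Rmult_1_l, Rmult_1_r by lra; lra)).
  destruct (adapted_scale_weight k t ltac:(lra)) as [Hw1 _].
  pose proof (tilde_density_ge0 _ w adapted_scale_halving 2).
  assert (1 <= INR (S k)) by (rewrite S_INR; pose proof (pos_INR k); lra).
  assert (Hp : 1 <= INR (S k) * w t) by nra.
  unfold W, S0. rewrite Rmult_assoc.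
  replace (INR (S k) * (2 * w t)) with (2 * (INR (S k) * w t)) in Hupper by ring.
  nra.
Qed.

Lemma little_o_tilde_weight_f : little_o_infty W f.
Proof.
  intros eps Heps.
  assert (HS0 : 0 < S0) by (pose proof (tilde_density_ge0 _ w adapted_scale_halving 2);
                            unfold S0; lra).
  destruct (INR_unbounded (S0 / eps)) as [K HK].
  exists (T K). intros t Ht.
  destruct (adapted_scale_block K t Ht) as [k [HKk Hblock]].
  pose proof (adapted_scale_ge2 k).
  destruct (adapted_scale_weight k t ltac:(lra)) as [Hw1 Hf].
  replace (INR (S k) ^ 2) with (INR (S k) * INR (S k)) in Hf by ring.
  assert (Hsk : S0 <= eps * INR (S k)).
  { assert (Hk : INR K <= INR k) by (apply le_INR; exact HKk).
    rewrite S_INR. apply Rmult_lt_compat_l with (r := eps) in HK; [| exact Heps].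
    replace (eps * (S0 / eps)) with S0 in HK by (field; lra). nra. }
  pose proof (tilde_weight_le_scale k t Hblock).
  assert (HW0 : 0 <= W t) by (apply tilde_weight_ge0; [apply adapted_scale_halving | exact Hw | lra]).
  assert (0 < INR (S k)) by apply lt_0_INR, Nat.lt_0_succ.
  assert (Hf0 : 0 <= f t) by nra.
  rewrite (Rabs_pos_eq (W t)), (Rabs_pos_eq (f t)) by assumption.
  apply Rmult_le_reg_l with (INR (S k)); [lra |]. nra.
Qed.

Lemma ex_RInt_tilde_weight_div_sq a b : 0 < a -> 0 < b ->
  ex_RInt (fun t => W t / t ^ 2) a b.
Proof.
  apply ex_RInt_div_sq. intros x _.
  apply tilde_weight_continuity_pt; [apply adapted_scale_halving | exact Hw].
Qed.

Lemma RInt_tilde_weight_block k : RInt (fun t => W t / t ^ 2) (T k) (T (S k)) <= S0 * (/ 2) ^ k.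
Proof.
  pose proof (adapted_scale_ge2 k). pose proof (adapted_scale_ge2 (S k)).
  pose proof (proj2 HT k).
  assert (Hex_w : ex_RInt (fun t => w t / t ^ 2) (T k) (T (S k))).
  { apply ex_RInt_div_sq; [| lra | lra]. intros x Hx.
    apply concave_weight_continuity_pt; assumption. }
  eapply Rle_trans.
  - apply RInt_le with (g := fun t => (S0 * INR (S k)) * (w t / t ^ 2)); [lra | | |].
    + apply ex_RInt_tilde_weight_div_sq; lra.
    + exact (ex_RInt_scal _ _ _ _ Hex_w).
    + intros t Ht. unfold Rdiv. rewrite <- Rmult_assoc.
      apply Rmult_le_compat_r; [apply Rlt_le, Rinv_0_lt_compat, pow_lt; lra |].
      apply tilde_weight_le_scale. lra.
  - rewrite RInt_scal_R by exact Hex_w.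
    pose proof (adapted_scale_tail k (T k) (T (S k)) (Rle_refl _) ltac:(lra)).
    assert (0 < S0 * INR (S k)).
    { apply Rmult_lt_0_compat; [| apply lt_0_INR, Nat.lt_0_succ].
      pose proof (tilde_density_ge0 _ w adapted_scale_halving 2). unfold S0. lra. }
    eapply Rle_trans; [apply Rmult_le_compat_l; [lra | eassumption] |].
    right. field. apply not_0_INR, Nat.neq_succ_0.
Qed.

Lemma RInt_tilde_weight_div_sq_ge0 a b : 0 < a -> a <= b ->
  0 <= RInt (fun t => W t / t ^ 2) a b.
Proof.
  intros Ha Hab. apply RInt_ge_0; [exact Hab | apply ex_RInt_tilde_weight_div_sq; lra |].
  intros t Ht. apply Rdiv_le_0_compat; [| apply pow_lt; lra].
  apply tilde_weight_ge0; [apply adapted_scale_halving | exact Hw | lra].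
Qed.

Lemma RInt_tilde_weight_div_sq_Chasles a b c : 0 < a -> 0 < b -> 0 < c ->
  RInt (fun t => W t / t ^ 2) a b + RInt (fun t => W t / t ^ 2) b c
  = RInt (fun t => W t / t ^ 2) a c.
Proof.
  intros Ha Hb Hc. apply (RInt_Chasles (fun t => W t / t ^ 2));
    apply ex_RInt_tilde_weight_div_sq; assumption.
Qed.

Lemma RInt_tilde_weight_scale n : RInt (fun t => W t / t ^ 2) (T 0%nat) (T n) <= 2 * S0.
Proof.
  assert (HS0 : 0 <= S0)
    by (pose proof (tilde_density_ge0 _ w adapted_scale_halving 2); unfold S0; lra).
  enough (RInt (fun t => W t / t ^ 2) (T 0%nat) (T n) <= S0 * (2 - 2 * (/ 2) ^ n))
    by (pose proof (pow_le (/ 2) n ltac:(lra)); nra).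
  induction n as [|n IH].
  - rewrite RInt_point. unfold zero; simpl. lra.
  - pose proof (adapted_scale_ge2 0). pose proof (adapted_scale_ge2 n).
    pose proof (adapted_scale_ge2 (S n)).
    rewrite <- (RInt_tilde_weight_div_sq_Chasles (T 0%nat) (T n) (T (S n))) by lra.
    pose proof (RInt_tilde_weight_block n). change ((/ 2) ^ S n) with (/ 2 * (/ 2) ^ n). lra.
Qed.

Lemma tilde_weight_non_quasianalytic : non_quasianalytic W.
Proof.
  pose proof (adapted_scale_ge2 0).
  apply ex_RInt_gen_monotone_bounded.
  - intros a b Ha Hb. apply ex_RInt_tilde_weight_div_sq; lra.
  - intros x y Hx Hxy. rewrite <- (RInt_tilde_weight_div_sq_Chasles 1 x y) by lra.
    pose proof (RInt_tilde_weight_div_sq_ge0 x y ltac:(lra) Hxy). lra.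
  - exists (RInt (fun t => W t / t ^ 2) 1 (T 0%nat) + 2 * S0). intros b Hb.
    destruct (adapted_scale_unbounded b) as [n Hn].
    pose proof (adapted_scale_ge2 n). pose proof (adapted_scale_le 0 n (Nat.le_0_l n)).
    pose proof (RInt_tilde_weight_scale n).
    pose proof (RInt_tilde_weight_div_sq_Chasles 1 b (T n) ltac:(lra) ltac:(lra) ltac:(lra)).
    pose proof (RInt_tilde_weight_div_sq_Chasles 1 (T 0%nat) (T n) ltac:(lra) ltac:(lra) ltac:(lra)).
    pose proof (RInt_tilde_weight_div_sq_ge0 b (T n) ltac:(lra) Hn).
    lra.
Qed.

End AdaptedScale.

Theorem lemma6p2 (w f : R -> R) :
  concave_weight w -> non_quasianalytic w ->
  (forall t, 0 <= t -> 0 <= f t) ->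
  little_o_infty w f ->
  exists w' : R -> R,
    concave_weight w' /\ non_quasianalytic w' /\
    little_o_infty w w' /\ little_o_infty w' f.
Proof.
  intros Hw Hnq Hf Hwf.
  destruct (exists_adapted_scale w f Hw Hnq Hf Hwf) as [T HT].
  pose proof (adapted_scale_halving w f T HT) as Hc.
  exists (tilde_weight (fun n => / T n) w). split; [| split; [| split]].
  - exact (tilde_weight_concave_weight _ w Hc Hw).
  - exact (tilde_weight_non_quasianalytic w f T Hw HT).
  - exact (little_o_weight_tilde_weight _ w Hc Hw).
  - exact (little_o_tilde_weight_f w f T Hw HT).
Qed.
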